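(* Let $1<w\le 2$ and $1<h\le 2$, let $n\ge 2$ and $\frac12\le y_1<\dots<y_n\le h-\frac12$. In every reasonable layout of this instance, the bottom square is not contained in the bounding box of the other squares.
   Context: The instance is the strip $T=[0,w]\times[0,h]$ with the given $y_i$. A layout is a pair $(\mathbf x,\prec)$ where $\mathbf x=(x_1,\dots,x_n)$ with $x_i\in[\frac12,w-\frac12]$, and $\prec$ is a total order (stacking order) on the squares $s_1,\dots,s_n$, where $s_i$ is the closed axis-parallel unit square with centre $(x_i,y_i)$. If $s_i\prec s_j$ we say $s_j$ is in front of $s_i$ and $s_i$ is behind $s_j$; the bottom square is the $\prec$-minimal square. A point $p$ on the boundary of $s_i$ is visible if every square $s_j$ ($j\neq i$) containing $p$ is behind $s_i$. The visible perimeter of $s_i$ is the total length of its visible boundary points; the gap of $s_i$ is its visible perimeter minus $2$, the gap of a layout is the minimum of the gaps of its squares, and a layout is reasonable if its gap is positive. The bounding box of a collection of squares is the smallest axis-parallel rectangle containing them. *)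

From HB Require Import structures.
From mathcomp Require Import all_boot all_order all_algebra.
From mathcomp Require Import all_classical all_reals.
From mathcomp Require Import ereal lebesgue_measure.
Set Implicit Arguments. Unset Strict Implicit. Unset Printing Implicit Defensive.
Import Order.TTheory GRing.Theory Num.Theory.
Local Open Scope classical_set_scope.
Local Open Scope ring_scope.

Section Defs.
Variables (R : realType) (n : nat).

Definition unit_square (cx cy : R) : set (R * R) :=
  [set p | `|p.1 - cx| <= 1/2 /\ `|p.2 - cy| <= 1/2].

(* [prec i j] means s_i is behind s_j; a stacking order is a strict total order *)
Definition stacking_order (prec : rel 'I_n) : Prop :=
  [/\ forall i, ~~ prec i i,
      forall i j k, prec i j -> prec j k -> prec i k &
      forall i j, i != j -> prec i j || prec j i].

Definition is_layout (w : R) (x : 'I_n -> R) (prec : rel 'I_n) : Prop :=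
  (forall i, 1/2 <= x i <= w - 1/2) /\ stacking_order prec.

Definition square (x y : 'I_n -> R) (i : 'I_n) := unit_square (x i) (y i).

Definition visible (x y : 'I_n -> R) (prec : rel 'I_n) (i : 'I_n) (p : R * R) :=
  forall j, j != i -> square x y j p -> prec j i.

Definition edge (x y : 'I_n -> R) (i : 'I_n) (k : 'I_4) (t : R) : R * R :=
  if val k == 0%N then (x i - 1/2 + t, y i - 1/2)
  else if val k == 1%N then (x i - 1/2 + t, y i + 1/2)
  else if val k == 2%N then (x i - 1/2, y i - 1/2 + t)
  else (x i + 1/2, y i - 1/2 + t).

Definition visible_perimeter (x y : 'I_n -> R) (prec : rel 'I_n) (i : 'I_n)
  : \bar R :=
  (\sum_(k < 4) lebesgue_measure
      [set t : R | (0 <= t <= 1)%R /\ visible x y prec i (edge x y i k t)])%E.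

(* gap of s_i = visible perimeter - 2 (visible perimeter is finite, <= 4) *)
Definition gap (x y : 'I_n -> R) (prec : rel 'I_n) (i : 'I_n) : R :=
  fine (visible_perimeter x y prec i) - 2.

(* the gap of the layout (minimum of the gaps) is positive *)
Definition reasonable (x y : 'I_n -> R) (prec : rel 'I_n) : Prop :=
  forall i, 0 < gap x y prec i.

Definition is_bottom (prec : rel 'I_n) (b : 'I_n) : Prop :=
  forall j, j != b -> prec b j.

Definition rectangle (a1 a2 c1 c2 : R) : set (R * R) :=
  [set p | a1 <= p.1 <= a2 /\ c1 <= p.2 <= c2].

(* s_b lies in the bounding box (the smallest axis-parallel rectangle
   containing the squares s_j, j <> b), i.e. in every axis-parallel
   rectangle containing them *)
Definition in_bbox_of_others (x y : 'I_n -> R) (b : 'I_n) : Prop :=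
  forall a1 a2 c1 c2,
    (forall j, j != b -> square x y j `<=` rectangle a1 a2 c1 c2) ->
    square x y b `<=` rectangle a1 a2 c1 c2.

End Defs.

From HB Require Import structures.
From mathcomp Require Import all_boot all_order all_algebra.
From mathcomp Require Import all_classical all_reals.
From mathcomp Require Import ereal measure_extension measure lebesgue_measure lra.
Import Order.TTheory GRing.Theory Num.Theory.
Local Open Scope classical_set_scope.
Local Open Scope ring_scope.

(* Every centre lies in [1/2, 3/2]^2, so any other square s_j overlaps the top
   or the bottom edge of the bottom square s_b in a unit-length window shifted
   by x_j - x_b, and all of the overlap is hidden.  Since s_b is in the bounding
   box of the others, some s_j has x_j <= x_b and some has x_j >= x_b; their
   two windows leave at most length 1 of the horizontal edges visible.  The same
   holds for the vertical edges, so the visible perimeter of s_b is at most 2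
   and its gap is not positive. *)

Section UncoveredMeasure.
Context {R : realType}.
Local Notation mu := (@lebesgue_measure R).

Lemma le_lebesgue_measure {A B : set R} : A `<=` B -> (mu A <= mu B)%E.
Proof. by move=> AB; apply: le_outer_measure. Qed.

Definition uncovered (a : R) : set R :=
  [set t | 0 <= t <= 1 /\ ~ a <= t <= a + 1].

Lemma lebesgue_measure_le1 (S : set R) :
  S `<=` [set t | 0 <= t <= 1] -> (mu S <= 1%:E)%E.
Proof.
move=> S01.
have S_sub : S `<=` [set` `[0, 1]%R] by move=> t /S01; rewrite /= in_itv.
apply: le_trans (le_lebesgue_measure S_sub) _.
by rewrite lebesgue_measure_itv /= lte_fin ltr01 sube0.
Qed.

Lemma lebesgue_measure_uncovered (a : R) :
  -1 <= a <= 1 -> (mu (uncovered a) <= `|a|%:E)%E.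
Proof.
move=> /andP[a_ge a_le].
have [a_le0|a_gt0] := leP a 0.
  have sub : uncovered a `<=` [set` `]a + 1, 1]%R].
    move=> t [/andP[t0 t1] tNa]; rewrite /= in_itv /= t1 andbT ltNge.
    by apply/negP => ta; apply: tNa; apply/andP; split; lra.
  apply: le_trans (le_lebesgue_measure sub) _.
  rewrite lebesgue_measure_itv /= lte_fin; case: ifP => _; last by rewrite lee_fin.
  by rewrite -EFinD lee_fin ler0_norm //; lra.
have sub : uncovered a `<=` [set` `[0, a[%R].
  move=> t [/andP[t0 t1] tNa]; rewrite /= in_itv /= t0 ltNge.
  by apply/negP => ta; apply: tNa; apply/andP; split; lra.
apply: le_trans (le_lebesgue_measure sub) _.
rewrite lebesgue_measure_itv /= lte_fin; case: ifP => _; last by rewrite lee_fin.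
by rewrite -EFinD lee_fin gtr0_norm //; lra.
Qed.

Lemma uncoveredI_eq0 {a1 a2 : R} :
  a1 <= 0 <= a2 -> a2 <= a1 + 1 -> uncovered a1 `&` uncovered a2 = set0.
Proof.
move=> /andP[a1_le0 a2_ge0] a21; apply/seteqP; split=> // t.
move=> [[/andP[t0 t1] tNa1] [_ tNa2]].
have [ta1|ta1] := leP t (a1 + 1).
  by apply: tNa1; apply/andP; split; lra.
by apply: tNa2; apply/andP; split; lra.
Qed.

Lemma lebesgue_measure_pair_le1 {S0 S1 : set R} (a1 a2 : R) :
  a1 <= 0 <= a2 -> a2 <= a1 + 1 ->
  S0 `<=` [set t | 0 <= t <= 1] -> S1 `<=` [set t | 0 <= t <= 1] ->
  S0 `<=` uncovered a1 \/ S1 `<=` uncovered a1 ->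
  S0 `<=` uncovered a2 \/ S1 `<=` uncovered a2 ->
  (mu S0 + mu S1 <= 1%:E)%E.
Proof.
move=> a12 a21.
wlog S0a1 : S0 S1 / S0 `<=` uncovered a1 => [wlog_S0a1 S01 S11 [S0a1|S1a1] Sa2|].
- by apply: wlog_S0a1 => //; left.
- by rewrite addeC; apply: wlog_S0a1 => //; [left | case: Sa2; [right | left]].
move=> _ S11 _ [S0a2|S1a2].
  rewrite -[1%:E]add0e leeD ?lebesgue_measure_le1 //.
  have : S0 `<=` set0 by rewrite -(uncoveredI_eq0 a12 a21) subsetI.
  by move/le_lebesgue_measure; rewrite measure0.
have /andP[a1_le0 a2_ge0] := a12.
have mu_S0 : (mu S0 <= `|a1|%:E)%E.
  apply: le_trans (le_lebesgue_measure S0a1) (lebesgue_measure_uncovered _ _).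
  by apply/andP; split; lra.
have mu_S1 : (mu S1 <= `|a2|%:E)%E.
  apply: le_trans (le_lebesgue_measure S1a2) (lebesgue_measure_uncovered _ _).
  by apply/andP; split; lra.
apply: le_trans (leeD mu_S0 mu_S1) _.
by rewrite -EFinD lee_fin ler0_norm // ger0_norm //; lra.
Qed.

End UncoveredMeasure.

Section Visibility.
Context {R : realType} {n : nat}.
Implicit Types (x y : 'I_n -> R) (prec : rel 'I_n) (i j b : 'I_n).

Definition visible_edge x y prec i (k : 'I_4) : set R :=
  [set t | 0 <= t <= 1 /\ visible x y prec i (edge x y i k t)].

Definition horizontal_visible_length x y prec i : \bar R :=
  (lebesgue_measure (visible_edge x y prec i ord0)
   + lebesgue_measure (visible_edge x y prec i (Ordinal (isT : (1 < 4)%N))))%E.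

Lemma square_transpose x y j p : square x y j p -> square y x j (p.2, p.1).
Proof. by case. Qed.

Lemma visible_transpose x y prec i p :
  visible x y prec i p -> visible y x prec i (p.2, p.1).
Proof. by case: p => p1 p2 vis j ji /square_transpose; apply: vis. Qed.

Lemma visible_edge_transpose x y prec i k k' :
  (forall t, edge x y i k t = ((edge y x i k' t).2, (edge y x i k' t).1)) ->
  visible_edge x y prec i k = visible_edge y x prec i k'.
Proof.
move=> edge_kk'; apply/seteqP; split=> t [t01 vis]; split=> //.
  by move: vis; rewrite edge_kk'; case: (edge y x i k' t) => ? ? /visible_transpose.
by rewrite edge_kk'; apply: visible_transpose.
Qed.

(* The left and right edges of s_i are the bottom and top edges of s_i in the
   transposed layout. *)
Lemma visible_perimeter_transpose x y prec i :
  visible_perimeter x y prec i =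
  (horizontal_visible_length x y prec i + horizontal_visible_length y x prec i)%E.
Proof.
rewrite /visible_perimeter !big_ord_recl big_ord0 adde0 addeA.
by congr (_ + _ + (_ + _))%E; congr (lebesgue_measure _);
  apply: visible_edge_transpose.
Qed.

Lemma gap_le0 x y prec i :
  (visible_perimeter x y prec i <= 2%:E)%E -> gap x y prec i <= 0.
Proof.
by rewrite /gap; case: (visible_perimeter _ _ _ _) => //= r; rewrite lee_fin subr_le0.
Qed.

Lemma bottom_not_behind {prec b} : stacking_order prec -> is_bottom prec b ->
  forall j, j != b -> ~~ prec j b.
Proof.
move=> [irr trans _] b_bottom j jb; apply/negP => jb_prec.
by move: (irr b); rewrite (trans _ _ _ (b_bottom j jb) jb_prec).
Qed.

Lemma exists_neq b : (1 < n)%N -> exists j, j != b.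
Proof.
move=> n_gt1; have [b0|b_neq0] := eqVneq (val b) 0%N.
  by exists (Ordinal n_gt1); rewrite -(inj_eq val_inj) b0.
by exists (Ordinal (ltnW n_gt1)); rewrite eq_sym -(inj_eq val_inj).
Qed.

Section BottomSquare.
Context {x y : 'I_n -> R} {prec : rel 'I_n} {b : 'I_n}.
Hypothesis nothing_behind_b : forall j, j != b -> ~~ prec j b.

Lemma visible_edge_sub_uncovered {j k a} : j != b ->
  (forall t, a <= t <= a + 1 -> square x y j (edge x y b k t)) ->
  visible_edge x y prec b k `<=` uncovered a.
Proof.
move=> jb covered t [t01 vis]; split=> // ta.
by move/negP: (nothing_behind_b _ jb); apply; apply: vis => //; apply: covered.
Qed.

Lemma horizontal_edge_uncovered j : j != b -> `|y j - y b| <= 1 ->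
  visible_edge x y prec b ord0 `<=` uncovered (x j - x b) \/
  visible_edge x y prec b (Ordinal (isT : (1 < 4)%N)) `<=` uncovered (x j - x b).
Proof.
rewrite ler_norml => jb /andP[y_lo y_hi].
have [yb_le|yj_lt] := leP (y b) (y j); [right | left];
  apply: (visible_edge_sub_uncovered jb) => t /andP[t_lo t_hi];
  by rewrite /square /unit_square /edge /= !ler_norml; split; apply/andP; split; lra.
Qed.

Lemma horizontal_visible_length_le1 {jmin jmax} : jmin != b -> jmax != b ->
  x jmin <= x b <= x jmax -> `|x jmax - x jmin| <= 1 ->
  `|y jmin - y b| <= 1 -> `|y jmax - y b| <= 1 ->
  (horizontal_visible_length x y prec b <= 1%:E)%E.
Proof.
move=> jmin_b jmax_b /andP[jmin_le jmax_ge] /ler_normlP[_ x_close] ymin ymax.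
apply: (lebesgue_measure_pair_le1 (x jmin - x b) (x jmax - x b)).
- by apply/andP; split; lra.
- lra.
- by move=> t [].
- by move=> t [].
- exact: horizontal_edge_uncovered.
- exact: horizontal_edge_uncovered.
Qed.

End BottomSquare.

Lemma square_sub_rectangleE x y j a1 a2 c1 c2 :
  square x y j `<=` rectangle a1 a2 c1 c2 <->
  a1 + 1/2 <= x j <= a2 - 1/2 /\ c1 + 1/2 <= y j <= c2 - 1/2.
Proof.
split=> [sub | [/andP[? ?] /andP[? ?]] p].
  have corner e : `|e| <= 1/2 -> square x y j (x j + e, y j + e).
    by rewrite /square /unit_square /= (addrC (x j)) (addrC (y j)) !addrK.
  have lo : square x y j (x j - 1/2, y j - 1/2).
    by apply: corner; rewrite normrN ger0_norm.
  have hi : square x y j (x j + 1/2, y j + 1/2) by apply: corner; rewrite ger0_norm.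
  move: (sub _ lo) (sub _ hi); rewrite /rectangle /=.
  move=> -[/andP[? _] /andP[? _]] [/andP[_ ?] /andP[_ ?]].
  by split; apply/andP; split; lra.
rewrite /square /unit_square /rectangle /= !ler_norml => -[/andP[? ?] /andP[? ?]].
by split; apply/andP; split; lra.
Qed.

Lemma in_bbox_of_others_transpose {x y b} :
  in_bbox_of_others x y b -> in_bbox_of_others y x b.
Proof.
move=> bbox a1 a2 c1 c2 others; apply/square_sub_rectangleE/and_comm.
apply/square_sub_rectangleE/bbox => j jb.
by apply/square_sub_rectangleE/and_comm/square_sub_rectangleE/others.
Qed.

Lemma in_bbox_of_others_between {x y b j0} : j0 != b -> in_bbox_of_others x y b ->
  exists jmin jmax, [/\ jmin != b, jmax != b & x jmin <= x b <= x jmax].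
Proof.
move=> j0b bbox.
have [jmin jmin_b jmin_le] := arg_minP (P := predC1 b) x j0b.
have [jmax jmax_b jmax_ge] := arg_maxP (P := predC1 b) x j0b.
have [kmin kmin_b kmin_le] := arg_minP (P := predC1 b) y j0b.
have [kmax kmax_b kmax_ge] := arg_maxP (P := predC1 b) y j0b.
exists jmin, jmax; split=> //.
have /square_sub_rectangleE[/andP[? ?] _] : square x y b `<=`
    rectangle (x jmin - 1/2) (x jmax + 1/2) (y kmin - 1/2) (y kmax + 1/2).
  apply: bbox => j jb; apply/square_sub_rectangleE.
  move: (jmin_le j jb) (jmax_ge j jb) (kmin_le j jb) (kmax_ge j jb) => /= *.
  by split; apply/andP; split; lra.
by apply/andP; split; lra.
Qed.

End Visibility.

Theorem proposition3 (R : realType) (w h : R) (n : nat) (y : 'I_n -> R) :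
  1 < w <= 2 -> 1 < h <= 2 -> (2 <= n)%N ->
  (forall i, 1/2 <= y i <= h - 1/2) ->
  (forall i j : 'I_n, (i < j)%N -> y i < y j) ->
  forall (x : 'I_n -> R) (prec : rel 'I_n),
    is_layout w x prec -> reasonable x y prec ->
    forall b : 'I_n, is_bottom prec b -> ~ in_bbox_of_others x y b.
Proof.
move=> /andP[_ w_le2] /andP[_ h_le2] n_ge2 y_range _ x prec [x_range order]
  reasonable_layout b b_bottom bbox.
have nothing_behind_b := bottom_not_behind order b_bottom.
have close_x i j : `|x i - x j| <= 1.
  move: (x_range i) (x_range j) => /andP[? ?] /andP[? ?].
  by rewrite ler_norml; apply/andP; split; lra.
have close_y i j : `|y i - y j| <= 1.
  move: (y_range i) (y_range j) => /andP[? ?] /andP[? ?].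
  by rewrite ler_norml; apply/andP; split; lra.
have [j0 j0b] := exists_neq b n_ge2.
have [jmin [jmax [jmin_b jmax_b x_between]]] := in_bbox_of_others_between j0b bbox.
have [kmin [kmax [kmin_b kmax_b y_between]]] :=
  in_bbox_of_others_between j0b (in_bbox_of_others_transpose bbox).
have := reasonable_layout b; apply/negP; rewrite -leNgt gap_le0 //.
rewrite visible_perimeter_transpose (_ : 2%:E = 1%:E + 1%:E)%E; last by rewrite -EFinD.
apply: leeD.
- exact: (horizontal_visible_length_le1 nothing_behind_b jmin_b jmax_b x_between
           (close_x _ _) (close_y _ _) (close_y _ _)).
- exact: (horizontal_visible_length_le1 nothing_behind_b kmin_b kmax_b y_between
           (close_y _ _) (close_x _ _) (close_x _ _)).
Qed.
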